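(* Let $w$ be a metric on a finite set $V$ with $|V|\ge 3$, $T$ a minimum spanning tree of $G_w$, and $T'$ any subtree of $T$. Then $\mathsf{TSP}(w)\ge 2\cdot w(T')-2\cdot\mathsf{adv}^*(T')$.
   Context: $G_w$ is the complete graph on $V$ with edge weights $w$; $w(E')=\sum_{e\in E'}w(e)$ and $w(T')=w(E(T'))$. $\mathsf{TSP}(w)$ is the minimum weight of a Hamiltonian cycle in $G_w$. For a pair $e=(u,v)$, $P^T_e$ is the $u$–$v$ path in $T$; $f\in E(T)$ is covered by $e$ iff $f\in E(P^T_e)$; $\mathsf{cov}(E')$ is the set of edges of $T$ covered by some pair of $E'$; for a subtree $T'$, $\mathsf{cov}(E',T')=\mathsf{cov}(E')\cap E(T')$ and $\mathsf{adv}(E',T')=w(\mathsf{cov}(E',T'))-w(E')$. A vertex $x$ is special in $T'$ iff $\deg_{T'}(x)\ne 2$. $\mathsf{adv}^*(T')$ is the maximum of $\mathsf{adv}(E',T')$ over all sets $E'$ of pairs each having at least one endpoint that is a special vertex of $T'$. *)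

From mathcomp Require Import all_boot all_order all_algebra all_fingroup.
Set Implicit Arguments. Unset Strict Implicit. Unset Printing Implicit Defensive.
Import Order.TTheory GRing.Theory Num.Theory.
Local Open Scope ring_scope.

Section Defs.
Variables (R : realFieldType) (V : finType).

Definition is_pair (e : {set V}) : bool := #|e| == 2%N.

Definition is_metric (w : V -> V -> R) : Prop :=
  [/\ forall u, w u u = 0,
      forall u v, u != v -> 0 < w u v,
      forall u v, w u v = w v u &
      forall u v x, w u v <= w u x + w x v].

(* weight of an edge {u,v}: w u v (independent of the orientation when w is symmetric) *)
Definition wE (w : V -> V -> R) (e : {set V}) : R :=
  if [pick uv : V * V | (uv.1 != uv.2) && (e == [set uv.1; uv.2])] is Some uv
  then w uv.1 uv.2 else 0.

Definition wS (w : V -> V -> R) (E : {set {set V}}) : R := \sum_(e in E) wE w e.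

Definition adj (F : {set {set V}}) : rel V := fun x y => [set x; y] \in F.

Definition connected_on (U : {set V}) (F : {set {set V}}) : Prop :=
  forall u v, u \in U -> v \in U ->
    exists p : seq V, [/\ path (adj F) u p, last u p = v & all (mem U) p].

Definition acyclic (F : {set {set V}}) : Prop :=
  forall p : seq V, uniq p -> (3 <= size p)%N -> ~~ path.cycle (adj F) p.

Definition is_tree (U : {set V}) (F : {set {set V}}) : Prop :=
  [/\ U != set0,
      forall e, e \in F -> is_pair e && (e \subset U),
      connected_on U F & acyclic F].

Definition spanning_tree (T : {set {set V}}) : Prop := is_tree setT T.

Definition min_spanning_tree (w : V -> V -> R) (T : {set {set V}}) : Prop :=
  spanning_tree T /\ forall T2, spanning_tree T2 -> wS w T <= wS w T2.

Definition subtree (T : {set {set V}}) (U' : {set V}) (F' : {set {set V}}) : Prop :=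
  F' \subset T /\ is_tree U' F'.

(* f lies on a (simple) u-v path of T; in a tree this path P^T_{uv} is unique *)
Definition on_path (T : {set {set V}}) (u v : V) (f : {set V}) : bool :=
  [exists k : 'I_#|V|, exists p : k.-tuple V,
     [&& path (adj T) u p, last u p == v, uniq (u :: p) &
         has (fun xy => [set xy.1; xy.2] == f) (zip (u :: p) p)]].

Definition covers (T : {set {set V}}) (e f : {set V}) : bool :=
  [exists u, exists v, (e == [set u; v]) && on_path T u v f].

Definition cov (T : {set {set V}}) (E F' : {set {set V}}) : {set {set V}} :=
  [set f in F' | [exists e in E, covers T e f]].

Definition adv (w : V -> V -> R) (T : {set {set V}}) (E F' : {set {set V}}) : R :=
  wS w (cov T E F') - wS w E.

Definition deg (F : {set {set V}}) (x : V) : nat := #|[set e in F | x \in e]|.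

Definition special (U' : {set V}) (F' : {set {set V}}) (x : V) : bool :=
  (x \in U') && (deg F' x != 2%N).

Definition admissible (U' : {set V}) (F' : {set {set V}}) (E : {set {set V}}) : bool :=
  [forall e in E, is_pair e && [exists x in e, special U' F' x]].

(* adv*(T') : maximum over admissible E'.  The empty set is admissible with
   adv = 0, so using 0 as the neutral element gives exactly the maximum. *)
Definition advstar (w : V -> V -> R) (T : {set {set V}}) (U' : {set V})
  (F' : {set {set V}}) : R :=
  \big[Num.max/0]_(E : {set {set V}} | admissible U' F' E) adv w T E F'.

Definition tour (w : V -> V -> R) (s : seq V) : R :=
  \sum_(xy <- zip s (rot 1 s)) w xy.1 xy.2.

Definition TSP (w : V -> V -> R) : R :=
  \big[Num.min/tour w (enum V)]_(s : {perm V}) tour w [seq s x | x <- enum V].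

End Defs.

From mathcomp Require Import all_boot all_order all_algebra all_fingroup.
From mathcomp Require Import lra.
Set Implicit Arguments. Unset Strict Implicit. Unset Printing Implicit Defensive.
Import Order.TTheory GRing.Theory Num.Theory.

(* Let O be the set of odd-degree vertices of T': they are special, and |O| is
   even by the handshake lemma.  Shortcutting an optimal tour to O gives a cycle
   through O of weight at most TSP(w), which splits into two perfect matchings
   M1, M2 of O.  Each Mi covers every edge f of T': deleting f cuts T' in two,
   the side of one endpoint of f contains an odd number of vertices of O, so
   some pair of Mi straddles the cut and its tree path runs through f.  Hence
   w(T') - w(Mi) = adv(Mi, T') <= adv*(T'), and adding the two inequalities
   gives 2 w(T') - 2 adv*(T') <= w(M1) + w(M2) <= TSP(w). *)

Lemma odd_card_odd (I : finType) (A : {set I}) (g : I -> nat) :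
  odd #|[set x in A | odd (g x)]| = odd (\sum_(x in A) g x).
Proof.
rewrite -sum1_card (eq_bigl (fun x => (x \in A) && odd (g x))) => [|x]; last by rewrite inE.
rewrite big_mkcondr /=; apply: (big_ind2 (fun m n => odd m = odd n)) => //.
  by move=> m1 n1 m2 n2; rewrite !oddD => -> ->.
by move=> x _; case: (odd (g x)).
Qed.

Lemma path_crossing (T : eqType) (r : rel T) (A : pred T) x s :
  path r x s -> A x -> ~~ A (last x s) ->
  exists2 yz, yz \in zip (x :: s) s & [&& r yz.1 yz.2, A yz.1 & ~~ A yz.2].
Proof.
elim: s x => [|y s IHs] x /=; first by move=> _ ->.
case/andP=> rxy pys Ax Alast; case Ay: (A y).
  by have [yz yzs] := IHs y pys Ay Alast; exists yz; rewrite // inE yzs orbT.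
by exists (x, y); rewrite ?inE ?eqxx //= rxy Ax Ay.
Qed.

Fixpoint pairup (T : Type) (s : seq T) : seq (T * T) :=
  if s is a :: b :: s' then (a, b) :: pairup s' else [::].

Lemma pairup_ind (T : Type) (P : seq T -> Prop) :
  P [::] -> (forall a, P [:: a]) -> (forall a b s, P s -> P [:: a, b & s]) ->
  forall s, P s.
Proof.
move=> P0 P1 P2; suff Ps s : P s /\ (forall a, P (a :: s)) by move=> s; case: (Ps s).
by elim: s => [|b s [Ps Pbs]]; split=> // a; apply: P2.
Qed.

Section Pairup.
Variable T : eqType.

Lemma mem_pairup (s : seq T) ab : ab \in pairup s -> (ab.1 \in s) && (ab.2 \in s).
Proof.
elim/pairup_ind: s => // a b s IHs; rewrite inE => /predU1P [-> | /IHs].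
  by rewrite !inE !eqxx orbT.
by case/andP=> s1 s2; rewrite !inE s1 s2 !orbT.
Qed.

Lemma pairup_neq (s : seq T) ab : uniq s -> ab \in pairup s -> ab.1 != ab.2.
Proof.
elim/pairup_ind: s => // a b s IHs /= /and3P [abs _ us].
rewrite inE => /predU1P [-> | /IHs]; last exact.
by move: abs; rewrite inE negb_or => /andP [].
Qed.

Lemma pairup_uniq (s : seq T) : uniq s -> uniq (pairup s).
Proof.
elim/pairup_ind: s => // a b s IHs /= /and3P [abs _ us]; rewrite IHs // andbT.
by apply: contra abs => /mem_pairup /andP [a_s _]; rewrite inE a_s orbT.
Qed.

Lemma has_pairup_split (A : pred T) (s : seq T) :
  ~~ odd (size s) -> odd (count A s) -> has (fun ab => A ab.1 != A ab.2) (pairup s).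
Proof.
elim/pairup_ind: s => // a b s IHs /=; rewrite negbK => evs.
by case: (A a); case: (A b) => //=; rewrite ?negbK => /IHs ->; rewrite ?orbT.
Qed.

End Pairup.

Section Cuts.
Variable V : finType.
Implicit Types (T F : {set {set V}}) (U A : {set V}).

Lemma card_set2I (a b : V) A :
  a != b -> #|[set a; b] :&: A| = ((a \in A) + (b \in A))%N.
Proof.
move=> ab; rewrite -(@eq_card _ (mem [seq x <- [:: a; b] | x \in A])) => [|x].
  rewrite (card_uniqP _) ?filter_uniq /= ?inE ?ab //.
  by case: (a \in A); case: (b \in A).
by rewrite mem_filter !inE andbC.
Qed.

Lemma sum_deg F A : \sum_(x in A) deg F x = \sum_(e in F) #|e :&: A|.
Proof.
transitivity (\sum_(x in A) \sum_(e in F) (x \in e : nat)).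
  apply: eq_bigr => x _; rewrite /deg -sum1_card big_mkcond [RHS]big_mkcond.
  apply: eq_bigr => e _.
  by rewrite !inE; case: (e \in F); case: (x \in e).
rewrite exchange_big; apply: eq_bigr => e _.
rewrite -sum1_card big_mkcond [RHS]big_mkcond; apply: eq_bigr => x _.
by rewrite !inE; case: (x \in A); case: (x \in e).
Qed.

Lemma odd_card_odd_deg F A : (forall e, e \in F -> is_pair e) ->
  odd #|[set x in A | odd (deg F x)]| = odd #|[set e in F | #|e :&: A| == 1]|.
Proof.
move=> Fpair; rewrite odd_card_odd sum_deg -odd_card_odd.
congr odd; apply: eq_card => e; rewrite !inE; apply: andb_id2l => /Fpair.
case/cards2P=> a [b [ab ->]]; rewrite card_set2I //.
by case: (a \in A); case: (b \in A).
Qed.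

Definition side F (f : {set V}) (u : V) : {set V} :=
  [set x | connect (adj (F :\ f)) u x].

Lemma side_closed F f u x y :
  x \in side F f u -> [set x; y] \in F -> [set x; y] != f -> y \in side F f u.
Proof.
rewrite !inE => ux xyF xyf; apply: connect_trans ux (connect1 _).
by rewrite /adj !inE xyf.
Qed.

Lemma notin_side F u v :
  acyclic F -> [set u; v] \in F -> u != v -> v \notin side F [set u; v] u.
Proof.
move=> Facyc uvF uv; rewrite inE; apply/connectP => -[p pu vlast].
move: vlast; case: (shortenP pu) => -[|y [|z q]] pu' upu _ qlast.
- by move: uv; rewrite qlast /= eqxx.
- by move: pu'; rewrite qlast /= /adj andbT !inE eqxx.
have := Facyc [:: u, y, z & q] upu isT; apply/negP.
rewrite /path.cycle rcons_path (sub_path _ pu') => [|a b]; last first.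
  by rewrite /adj inE => /andP [].
by rewrite negbK -qlast /adj setUC.
Qed.

Lemma crossing_side F u v : (forall e, e \in F -> is_pair e) -> acyclic F ->
  [set u; v] \in F -> u != v ->
  [set e in F | #|e :&: side F [set u; v] u| == 1] = [set [set u; v]].
Proof.
move=> Fpair Facyc uvF uv; apply/setP => e; rewrite !inE.
case: (eqVneq e [set u; v]) => [->|ne]; rewrite ?uvF.
  by rewrite card_set2I // inE connect0 (negbTE (notin_side Facyc uvF uv)).
case eF: (e \in F) => //=.
have /cards2P [a [b [ab eab]]] := Fpair e eF; rewrite eab in eF ne.
have ba_F : [set b; a] \in F by rewrite setUC.
have ba_ne : [set b; a] != [set u; v] by rewrite setUC.
have side_ab : (a \in side F [set u; v] u) = (b \in side F [set u; v] u).
  by apply/idP/idP => /side_closed; apply.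
by rewrite eab card_set2I // side_ab; case: (b \in _).
Qed.

Lemma on_path_cut T F U f u a b :
  F \subset T -> connected_on U F -> a \in U -> b \in U ->
  a \in side F f u -> b \notin side F f u -> on_path T a b f.
Proof.
move=> FT Fconn aU bU a_side b_side.
have [p [pa blast _]] := Fconn a b aU bU.
move: blast; case: (shortenP pa) => {pa}p pa ua _ blast.
have last_side : last a p \notin side F f u by rewrite blast.
have [xy xy_p /and3P [xyF x_side y_side]] :=
  path_crossing (A := fun x => x \in side F f u) pa a_side last_side.
have xy_f : [set xy.1; xy.2] == f.
  by apply: contraNT y_side => /(side_closed x_side xyF).
have size_p : size p < #|V| by have := max_card (mem (a :: p)); rewrite (card_uniqP ua).
apply/existsP; exists (Ordinal size_p); apply/existsP; exists (in_tuple p).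
apply/and4P; split=> //=; last by apply/hasP; exists xy.
- by apply: sub_path pa => x y /(subsetP FT).
- by rewrite blast.
Qed.

Definition odd_vertices F : {set V} := [set x | odd (deg F x)].

Lemma odd_vertices_sub U F x :
  (forall e, e \in F -> e \subset U) -> x \in odd_vertices F -> x \in U.
Proof.
move=> FU; rewrite inE /deg.
case: (set_0Vmem [set e in F | x \in e]) => [->|[e]]; first by rewrite cards0.
by rewrite inE => /andP [/FU /subsetP FU_e /FU_e].
Qed.

Lemma even_size_odd_vertices F t : (forall e, e \in F -> is_pair e) ->
  uniq t -> t =i odd_vertices F -> ~~ odd (size t).
Proof.
move=> Fpair ut t_odd; rewrite -(card_uniqP ut) (eq_card t_odd).
rewrite (eq_card (B := [set x in [set: V] | odd (deg F x)])) => [|x]; last by rewrite !inE.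
rewrite odd_card_odd_deg // (_ : [set e in F | _] = set0) ?cards0 //.
apply/setP => e; rewrite !inE setIT.
by case eF: (e \in F); rewrite //= (eqP (Fpair e eF)).
Qed.

Lemma pairup_covers T U F t f :
  F \subset T -> is_tree U F -> uniq t -> t =i odd_vertices F -> f \in F ->
  exists2 ab, ab \in pairup t & covers T [set ab.1; ab.2] f.
Proof.
move=> FT [_ Fedges Fconn Facyc] ut t_odd fF.
have Fpair e : e \in F -> is_pair e by case/Fedges/andP.
have FU e : e \in F -> e \subset U by case/Fedges/andP.
have count_t A : count (fun x => x \in A) t = #|[set x in A | odd (deg F x)]|.
  rewrite -size_filter -(card_uniqP (filter_uniq _ ut)); apply: eq_card => x.
  by rewrite mem_filter t_odd !inE andbC.
have even_t := even_size_odd_vertices Fpair ut t_odd.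
case/cards2P: (Fpair f fF) => u [v [uv fuv]]; rewrite {}fuv in fF *.
set S := side F [set u; v] u.
(* {u, v} is the only edge of F leaving S, so S holds an odd number of odd vertices. *)
have odd_S : odd (count (fun x => x \in S) t).
  by rewrite count_t odd_card_odd_deg // crossing_side // cards1.
have /hasP [[a b] ab_t /= ab_cross] := has_pairup_split even_t odd_S.
have [aU bU] : a \in U /\ b \in U.
  have /andP [] := mem_pairup ab_t; rewrite !t_odd.
  by move=> /(odd_vertices_sub FU) aU /(odd_vertices_sub FU).
exists (a, b) => //=; apply/existsP.
have [[a_S b_S] | [b_S a_S]] : a \in S /\ b \notin S \/ b \in S /\ a \notin S.
  by move: ab_cross; case: (a \in S); case: (b \in S); [|left|right|].
- by exists a; apply/existsP; exists b; rewrite eqxx (on_path_cut FT Fconn aU bU a_S b_S).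
- by exists b; apply/existsP; exists a; rewrite setUC eqxx (on_path_cut FT Fconn bU aU b_S a_S).
Qed.

End Cuts.

Local Open Scope ring_scope.

Lemma ler_sum_imset (R : numDomainType) (I J : finType) (A : {pred I})
    (h : I -> J) (g : J -> R) :
  (forall j, 0 <= g j) -> \sum_(j in [set h x | x in A]) g j <= \sum_(x in A) g (h x).
Proof.
move=> g_ge0; rewrite (partition_big_imset h) /=.
apply: ler_sum => _ /imsetP [x Ax ->].
rewrite (bigD1 x) ?Ax ?eqxx //= lerDl; exact: sumr_ge0.
Qed.

Section Tours.
Variables (R : realFieldType) (V : finType) (w : V -> V -> R).

Fixpoint path_weight (x : V) (s : seq V) : R :=
  if s is y :: s' then w x y + path_weight y s' else 0.

Lemma path_weight_rcons x s y :
  path_weight x (rcons s y) = path_weight x s + w (last x s) y.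
Proof. by elim: s x => [|a s IHs] x /=; rewrite ?add0r ?addr0 // IHs addrA. Qed.

Lemma tour_cons x s : tour w (x :: s) = path_weight x (rcons s x).
Proof.
rewrite /tour rot1_cons; move: {2 4}x.
by elim: s x => [|a s IHs] x y /=; rewrite big_cons ?big_nil ?IHs.
Qed.

Lemma tour_rot k s : tour w (rot k s) = tour w s.
Proof.
have tour_rot1 q : tour w (rot 1 q) = tour w q.
  case: q => [|x [|y q]] //.
  by rewrite rot1_cons /= !tour_cons /= path_weight_rcons last_rcons addrC.
case: (ltnP k (size s)) => [|/rot_oversize -> //].
by elim: k => [|k IHk] ltks; rewrite ?rot0 // rotS ?tour_rot1 ?IHk // ltnW.
Qed.

Lemma tour_ge0 s : is_metric w -> 0 <= tour w s.
Proof.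
case=> w0 wpos _ _; apply: sumr_ge0 => -[x y] _ /=.
by case: (eqVneq x y) => [->|nxy]; rewrite ?w0 // ltW ?wpos.
Qed.

Lemma path_weight_filter (P : pred V) x s :
  (forall u v y, w u v <= w u y + w y v) ->
  P (last x s) -> path_weight x (filter P s) <= path_weight x s.
Proof.
move=> tri; elim: s x => [|a s IHs] x //= Plast.
case: ifP => Pa /=; first by rewrite lerD2l IHs.
case: s IHs Plast => [|b s] IHs /= Plast; first by rewrite Plast in Pa.
by apply: le_trans (IHs x Plast) _; rewrite /= addrA lerD2r tri.
Qed.

Lemma shortcut_tour (O : {set V}) q :
  is_metric w -> uniq q -> {subset O <= q} ->
  exists t, [/\ uniq t, t =i O & tour w t <= tour w q].
Proof.
move=> wm uq Oq; case: (set_0Vmem O) => [-> | [o Oo]].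
  by exists [::]; split=> // [x|]; rewrite ?inE // /tour big_nil tour_ge0.
set r := rot (index o q) q.
have r_def : r = o :: behead r by rewrite /r (rot_index (Oq o Oo)).
exists (filter (mem O) r); split.
- by rewrite filter_uniq ?rot_uniq.
- by move=> x; rewrite mem_filter mem_rot; apply/andb_idr => /Oq.
- rewrite -(tour_rot (index o q) q) -/r r_def /= Oo !tour_cons.
  have -> : rcons (filter (mem O) (behead r)) o = filter (mem O) (rcons (behead r) o).
    by rewrite filter_rcons /= Oo.
  by case: wm => _ _ _ tri; apply: path_weight_filter; rewrite // last_rcons.
Qed.

End Tours.

Section PairupWeight.
Variables (R : realFieldType) (V : finType) (w : V -> V -> R).

Lemma sum_pairup_cons_rcons x s y : odd (size s) ->
  \sum_(ab <- pairup (x :: s)) w ab.1 ab.2 + \sum_(ab <- pairup (rcons s y)) w ab.1 ab.2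
  = path_weight w x (rcons s y).
Proof.
elim/pairup_ind: s x => [x //|a x _|a b s IHs x]; first by rewrite /= !big_seq1 addr0.
rewrite /= negbK => odds; rewrite !big_cons -(IHs b odds) /=.
by rewrite addrACA !addrA.
Qed.

Lemma sum_pairup_rot s : ~~ odd (size s) ->
  \sum_(ab <- pairup s) w ab.1 ab.2 + \sum_(ab <- pairup (rot 1 s)) w ab.1 ab.2
  = tour w s.
Proof.
case: s => [|x s] evs; first by rewrite /tour !big_nil addr0.
by rewrite rot1_cons tour_cons sum_pairup_cons_rcons // -[odd _]negbK.
Qed.

End PairupWeight.

Section Matchings.
Variables (R : realFieldType) (V : finType) (w : V -> V -> R).
Hypothesis w_metric : is_metric w.
Implicit Types (T F : {set {set V}}) (U : {set V}) (t q : seq V).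

Lemma wE_set2 a b : wE w [set a; b] = w a b.
Proof.
case: w_metric => w0 _ w_sym _; rewrite /wE.
case: pickP => [[x y] /= /andP [xy /eqP ab_xy] | none].
- move: xy; have : (x \in [set a; b]) && (y \in [set a; b]) by rewrite ab_xy set21 set22.
  rewrite !inE => /andP [] /orP [] /eqP -> /orP [] /eqP ->; rewrite ?eqxx ?[w b a]w_sym //.
- by case: (eqVneq a b) => [<-|ab]; [rewrite w0 | have := none (a, b); rewrite /= ab eqxx].
Qed.

Lemma wE_ge0 e : 0 <= wE w e.
Proof.
case: w_metric => _ wpos _ _; rewrite /wE; case: pickP => // -[x y] /= /andP [xy _].
by rewrite ltW ?wpos.
Qed.

Definition matching (t : seq V) : {set {set V}} :=
  [set [set ab.1; ab.2] | ab in pairup t].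

Lemma wS_matching t :
  uniq t -> wS w (matching t) <= \sum_(ab <- pairup t) w ab.1 ab.2.
Proof.
move=> ut; rewrite big_uniq ?pairup_uniq //=.
apply: le_trans (ler_sum_imset _ _ wE_ge0) _.
by apply: ler_sum => ab _; rewrite wE_set2.
Qed.

Lemma matching_admissible U F t :
  (forall e, e \in F -> e \subset U) -> uniq t -> t =i odd_vertices F ->
  admissible U F (matching t).
Proof.
move=> FU ut t_odd; apply/forallP => e; apply/implyP => /imsetP [[a b] ab_t ->] /=.
have a_odd : a \in odd_vertices F by rewrite -t_odd; case/andP: (mem_pairup ab_t).
rewrite /is_pair cards2 (pairup_neq ut ab_t) /=; apply/existsP; exists a.
rewrite set21 /special (odd_vertices_sub FU a_odd) /=.
by move: a_odd; rewrite inE; apply: contraL => /eqP ->.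
Qed.

Lemma matching_adv T U F t : subtree T U F -> uniq t -> t =i odd_vertices F ->
  wS w F - wS w (matching t) <= advstar w T U F.
Proof.
move=> [FT Ftree] ut t_odd.
have FU e : e \in F -> e \subset U.
  by case: Ftree => _ /(_ e) Fedges _ _ /Fedges /andP [].
have -> : wS w F = wS w (cov T (matching t) F).
  congr wS; apply/setP => f; rewrite inE; symmetry; apply/andb_idr => fF.
  have [ab ab_t ab_f] := pairup_covers FT Ftree ut t_odd fF.
  by apply/existsP; exists [set ab.1; ab.2]; rewrite ab_f andbT; apply/imsetP; exists ab.
exact: le_bigmax_cond (matching_admissible FU ut t_odd).
Qed.

Lemma tour_ge_tree_advstar T U F q :
  subtree T U F -> uniq q -> (forall x, x \in q) ->
  2 * wS w F - 2 * advstar w T U F <= tour w q.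
Proof.
move=> TUF uq q_all.
have [FT [_ Fedges _ _]] := TUF.
have Fpair e : e \in F -> is_pair e by case/Fedges/andP.
have [t [ut t_odd tq]] :=
  shortcut_tour (O := odd_vertices F) w_metric uq (fun x _ => q_all x).
(* The cycle t is the union of the matchings pairup t and pairup (rot 1 t). *)
have ur : uniq (rot 1 t) by rewrite rot_uniq.
have r_odd : rot 1 t =i odd_vertices F by move=> x; rewrite mem_rot.
have := sum_pairup_rot w (even_size_odd_vertices Fpair ut t_odd).
have := matching_adv TUF ut t_odd; have := matching_adv TUF ur r_odd.
have := wS_matching ut; have := wS_matching ur.
lra.
Qed.

End Matchings.

Theorem mainTheorem3 (R : realFieldType) (V : finType) (w : V -> V -> R)
  (T : {set {set V}}) (U' : {set V}) (F' : {set {set V}}) :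
  (3 <= #|V|)%N -> is_metric w -> min_spanning_tree w T -> subtree T U' F' ->
  2 * wS w F' - 2 * advstar w T U' F' <= TSP w.
Proof.
move=> _ w_metric _ T'_sub; rewrite /TSP.
have bound := tour_ge_tree_advstar w_metric T'_sub.
apply: le_bigmin => [|s _]; apply: bound => [|x].
- exact: enum_uniq.
- exact: mem_enum.
- by rewrite map_inj_uniq ?enum_uniq //; apply: perm_inj.
- by apply/mapP; exists ((s^-1)%g x); rewrite ?mem_enum ?permKV.
Qed.
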